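(* Fix speeds $v_1,v_2,v_3>0$ and turning-rate magnitudes $w_1,w_3>0$. Let LSL denote the CSC path with inputs $\mathbf{u}_1=(v_1,w_1)$, $\mathbf{u}_2=(v_2,0)$, $\mathbf{u}_3=(v_3,w_3)$, and RSR the CSC path with inputs $\mathbf{u}_1=(v_1,-w_1)$, $\mathbf{u}_2=(v_2,0)$, $\mathbf{u}_3=(v_3,-w_3)$. Then for every start pose $\mathbf{p}_0$ and every pose $\mathbf{p}_f=(x_f,y_f,\theta_f)$, $\mathbf{p}_f$ is reachable from $\mathbf{p}_0$ by the LSL path or by the RSR path (or both). Equivalently, for each $\theta_f$ the open discs $\{(x_f,y_f):(x_f-c)^2+(y_f-d)^2<r_{31}^2\}$ associated with LSL and with RSR are disjoint.
   Context: A pose is $\mathbf{p}=(x,y,\theta)$, heading understood modulo $2\pi$. An input is $\mathbf{u}=(v,\omega)$. The motion primitive $\mathrm{M}_{\mathbf{u},\tau}$ maps $(x,y,\theta)$ to: if $\omega\neq0$, $\big(x-\frac{v}{\omega}(\sin\theta-\sin(\theta+\omega\tau)),\ y+\frac{v}{\omega}(\cos\theta-\cos(\theta+\omega\tau)),\ \theta+\omega\tau\big)$; if $\omega=0$, $(x+v\tau\cos\theta,\ y+v\tau\sin\theta,\ \theta)$. For a path with fixed inputs $\mathbf{u}_1,\mathbf{u}_2,\mathbf{u}_3$, a pose $\mathbf{p}_f$ is reachable from $\mathbf{p}_0=(x_0,y_0,\theta_0)$ if there exist $\tau_1,\tau_2,\tau_3\ge0$, with $|\omega_i\tau_i|<2\pi$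 for turning segments, such that $\mathrm{M}_{\mathbf{u}_3,\tau_3}(\mathrm{M}_{\mathbf{u}_2,\tau_2}(\mathrm{M}_{\mathbf{u}_1,\tau_1}(\mathbf{p}_0)))$ has position $(x_f,y_f)$ and heading congruent to $\theta_f$ modulo $2\pi$. For a CSC path, $r_i=v_i/\omega_i$ ($i=1,3$), $r_{31}=r_3-r_1$, $c=x_0-r_1\sin\theta_0+r_3\sin\theta_f$, $d=y_0+r_1\cos\theta_0-r_3\cos\theta_f$; a CSC path reaches $\mathbf{p}_f$ iff $(x_f-c)^2+(y_f-d)^2\ge r_{31}^2$. *)

From Stdlib Require Import Reals Lra ZArith.
Open Scope R_scope.

(* A pose (x, y, theta); an input (v, omega). *)
Definition pose := (R * R * R)%type.
Definition input := (R * R)%type.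

Definition motion (u : input) (tau : R) (p : pose) : pose :=
  let '(v, w) := u in
  let '(x, y, th) := p in
  if Req_EM_T w 0 then
    (x + v * tau * cos th, y + v * tau * sin th, th)
  else
    (x - v / w * (sin th - sin (th + w * tau)),
     y + v / w * (cos th - cos (th + w * tau)),
     th + w * tau).

Definition admissible (u : input) (tau : R) : Prop :=
  0 <= tau /\ (snd u <> 0 -> Rabs (snd u * tau) < 2 * PI).

Definition pose_equiv (p q : pose) : Prop :=
  let '(x, y, th) := p in
  let '(x', y', th') := q in
  x = x' /\ y = y' /\ exists k : Z, th = th' + 2 * PI * IZR k.

Definition reachable (u1 u2 u3 : input) (p0 pf : pose) : Prop :=
  exists tau1 tau2 tau3 : R,
    admissible u1 tau1 /\ admissible u2 tau2 /\ admissible u3 tau3 /\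
    pose_equiv (motion u3 tau3 (motion u2 tau2 (motion u1 tau1 p0))) pf.

Definition LSL_reachable (v1 v2 v3 w1 w3 : R) (p0 pf : pose) : Prop :=
  reachable (v1, w1) (v2, 0) (v3, w3) p0 pf.

Definition RSR_reachable (v1 v2 v3 w1 w3 : R) (p0 pf : pose) : Prop :=
  reachable (v1, - w1) (v2, 0) (v3, - w3) p0 pf.

(** The LSL and RSR paths share the straight-segment input, and their turning
    radii are [r1, r3] and [-r1, -r3].  A CSC path reaches exactly the poses
    outside an open disc of radius [|r3 - r1|]; the LSL and RSR discs for a
    given final heading have centres [2 |r1 e(theta0) - r3 e(thetaf)|] apart,
    which is at least [2 |r3 - r1|] because [r1 r3 > 0].  So the two discs are
    disjoint and every final pose lies outside one of them. *)
From Stdlib Require Import Reals.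
From Stdlib Require Import Lra Lia ZArith.
Open Scope R_scope.

Lemma periodic_Z (f : R -> R) :
  (forall x n, f (x + 2 * INR n * PI) = f x) ->
  forall x k, f (x + 2 * PI * IZR k) = f x.
Proof.
  intros Hper x k.
  destruct (Z_le_gt_dec 0 k) as [Hk | Hk].
  - rewrite <- (Z2Nat.id k Hk), <- INR_IZR_INZ.
    replace (x + 2 * PI * INR (Z.to_nat k)) with (x + 2 * INR (Z.to_nat k) * PI)
      by ring.
    apply Hper.
  - assert (Ek : IZR k = - INR (Z.to_nat (- k))).
    { rewrite INR_IZR_INZ, Z2Nat.id, opp_IZR by lia. ring. }
    rewrite Ek, <- (Hper (x + 2 * PI * - INR (Z.to_nat (- k))) (Z.to_nat (- k))).
    f_equal. ring.
Qed.

Lemma sin_period_Z (x : R) (k : Z) : sin (x + 2 * PI * IZR k) = sin x.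
Proof. exact (periodic_Z sin sin_period x k). Qed.

Lemma cos_period_Z (x : R) (k : Z) : cos (x + 2 * PI * IZR k) = cos x.
Proof. exact (periodic_Z cos cos_period x k). Qed.

Lemma angle_in_0_2PI (beta : R) :
  exists k : Z, 0 <= beta + 2 * PI * IZR k < 2 * PI.
Proof.
  pose proof PI_RGT_0 as HPI.
  destruct (archimed (beta / (2 * PI))) as [Hup Hup'].
  exists (1 - up (beta / (2 * PI)))%Z.
  rewrite minus_IZR.
  assert (Hbeta : beta = 2 * PI * (beta / (2 * PI))) by (field; lra).
  split; nra.
Qed.

Lemma turning_duration_exists (w beta : R) : w <> 0 ->
  exists (tau : R) (k : Z),
    0 <= tau /\ Rabs (w * tau) < 2 * PI /\ w * tau = beta + 2 * PI * IZR k.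
Proof.
  intros Hw.
  destruct (Rlt_or_le 0 w) as [Hpos | Hneg].
  - destruct (angle_in_0_2PI beta) as [k Hk].
    exists ((beta + 2 * PI * IZR k) / w), k.
    replace (w * ((beta + 2 * PI * IZR k) / w)) with (beta + 2 * PI * IZR k)
      by (field; lra).
    repeat split; try lra.
    + apply Rmult_le_pos; [lra | apply Rlt_le, Rinv_0_lt_compat; lra].
    + rewrite Rabs_right; lra.
  - destruct (angle_in_0_2PI (- beta)) as [k Hk].
    exists ((- beta + 2 * PI * IZR k) / - w), (- k)%Z.
    replace (w * ((- beta + 2 * PI * IZR k) / - w)) with (- (- beta + 2 * PI * IZR k))
      by (field; lra).
    rewrite opp_IZR.
    repeat split; try lra.
    + apply Rmult_le_pos; [lra | apply Rlt_le, Rinv_0_lt_compat; lra].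
    + rewrite Rabs_Ropp, Rabs_right; lra.
Qed.

Lemma unit_circle_angle (a b : R) : a * a + b * b = 1 ->
  exists th, cos th = a /\ sin th = b.
Proof.
  intros Hab.
  assert (Ha : -1 <= a <= 1) by nra.
  assert (Hsin : sin (acos a) = Rabs b).
  { rewrite sin_acos, <- sqrt_Rsqr_abs by exact Ha. f_equal. unfold Rsqr. lra. }
  destruct (Rle_or_lt 0 b) as [Hb | Hb].
  - exists (acos a). rewrite cos_acos, Hsin, Rabs_right by lra. auto.
  - exists (- acos a). rewrite cos_neg, sin_neg, cos_acos, Hsin, Rabs_left by lra.
    split; ring.
Qed.

Lemma rotation_exists (X Y L r : R) : L * L + r * r = X * X + Y * Y ->
  exists th, X = L * cos th - r * sin th /\ Y = L * sin th + r * cos th.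
Proof.
  intros Hnorm.
  set (rho := X * X + Y * Y) in *.
  destruct (Req_dec rho 0) as [Hrho | Hrho].
  - assert (X = 0) by (unfold rho in Hrho; nra).
    assert (Y = 0) by (unfold rho in Hrho; nra).
    assert (L = 0) by nra. assert (r = 0) by nra. subst.
    exists 0. split; ring.
  - destruct (unit_circle_angle ((X * L + Y * r) / rho) ((Y * L - X * r) / rho))
      as [th [Hcos Hsin]].
    { transitivity (rho * (L * L + r * r) / (rho * rho)).
      - unfold rho. field. auto.
      - rewrite Hnorm. field. auto. }
    exists th. rewrite Hcos, Hsin. split.
    + transitivity (X * (L * L + r * r) / rho).
      * rewrite Hnorm. field. auto.
      * field. auto.
    + transitivity (Y * (L * L + r * r) / rho).
      * rewrite Hnorm. field. auto.
      * field. auto.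
Qed.

Lemma motion_turn (v w tau x y th : R) : w <> 0 ->
  motion (v, w) tau (x, y, th) =
  (x - v / w * (sin th - sin (th + w * tau)),
   y + v / w * (cos th - cos (th + w * tau)),
   th + w * tau).
Proof. intros Hw. unfold motion. destruct (Req_EM_T w 0); [contradiction | reflexivity]. Qed.

Lemma motion_straight (v tau x y th : R) :
  motion (v, 0) tau (x, y, th) = (x + v * tau * cos th, y + v * tau * sin th, th).
Proof. unfold motion. destruct (Req_EM_T 0 0); [reflexivity | contradiction]. Qed.

(** With [(X, Y)] the final
    position relative to the centre [(c, d)], the straight segment of length
    [L = sqrt (X^2 + Y^2 - r31^2)] and heading [th] must satisfy
    [(X, Y) = L e(th) + r31 e(th)^perp]; [rotation_exists] provides [th]. *)
Lemma csc_reachable (v1 v2 v3 w1 w3 x0 y0 th0 xf yf thf : R) :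
  0 < v2 -> w1 <> 0 -> w3 <> 0 ->
  (xf - (x0 - v1 / w1 * sin th0 + v3 / w3 * sin thf)) ^ 2
  + (yf - (y0 + v1 / w1 * cos th0 - v3 / w3 * cos thf)) ^ 2 >= (v3 / w3 - v1 / w1) ^ 2 ->
  reachable (v1, w1) (v2, 0) (v3, w3) (x0, y0, th0) (xf, yf, thf).
Proof.
  intros Hv2 Hw1 Hw3 Hout.
  set (r1 := v1 / w1) in *. set (r3 := v3 / w3) in *.
  set (X := xf - (x0 - r1 * sin th0 + r3 * sin thf)) in *.
  set (Y := yf - (y0 + r1 * cos th0 - r3 * cos thf)) in *.
  set (L := sqrt (X * X + Y * Y - (r3 - r1) * (r3 - r1))).
  assert (HL : L * L = X * X + Y * Y - (r3 - r1) * (r3 - r1)) by (apply sqrt_sqrt; nra).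
  destruct (rotation_exists X Y L (r3 - r1)) as [th [HX HY]]; [lra|].
  destruct (turning_duration_exists w1 (th - th0) Hw1) as [tau1 [k1 [H1 [H1' E1]]]].
  destruct (turning_duration_exists w3 (thf - th) Hw3) as [tau3 [k3 [H3 [H3' E3]]]].
  exists tau1, (L / v2), tau3.
  split; [split; auto|].
  split; [split; [apply Rmult_le_pos; [apply sqrt_pos | apply Rlt_le, Rinv_0_lt_compat; lra] | simpl; lra]|].
  split; [split; auto|].
  rewrite motion_turn, motion_straight, motion_turn by assumption.
  replace (th0 + w1 * tau1) with (th + 2 * PI * IZR k1) by lra.
  replace (th + 2 * PI * IZR k1 + w3 * tau3) with (thf + 2 * PI * IZR (k1 + k3))
    by (rewrite plus_IZR; lra).
  rewrite !sin_period_Z, !cos_period_Z.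
  replace (v2 * (L / v2)) with L by (field; lra).
  fold r1 r3.
  repeat split.
  - unfold X in HX. lra.
  - unfold Y in HY. lra.
  - exists (k1 + k3)%Z. reflexivity.
Qed.

(** By the parallelogram law [|c - d|^2 <= 2 |p - c|^2 + 2 |p - d|^2]. *)
Lemma far_discs_disjoint (cx cy dx dy rho px py : R) :
  (cx - dx) ^ 2 + (cy - dy) ^ 2 >= 4 * rho ^ 2 ->
  (px - cx) ^ 2 + (py - cy) ^ 2 >= rho ^ 2 \/ (px - dx) ^ 2 + (py - dy) ^ 2 >= rho ^ 2.
Proof.
  intros Hfar.
  destruct (Rge_or_gt ((px - cx) ^ 2 + (py - cy) ^ 2) (rho ^ 2)) as [Hc | Hc]; [now left|].
  right. pose proof (pow2_ge_0 (2 * px - cx - dx)). pose proof (pow2_ge_0 (2 * py - cy - dy)).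
  nra.
Qed.

Lemma turning_centres_far (r1 r3 a b : R) : 0 <= r1 * r3 ->
  (r1 * sin a - r3 * sin b) ^ 2 + (r1 * cos a - r3 * cos b) ^ 2 >= (r3 - r1) ^ 2.
Proof.
  intros Hr.
  pose proof (sin2_cos2 a) as Ha. pose proof (sin2_cos2 b) as Hb. unfold Rsqr in Ha, Hb.
  assert (Hcos : cos a * cos b + sin a * sin b <= 1)
    by (rewrite <- cos_minus; apply COS_bound).
  nra.
Qed.

Theorem theorem3 :
  forall (v1 v2 v3 w1 w3 : R),
    0 < v1 -> 0 < v2 -> 0 < v3 -> 0 < w1 -> 0 < w3 ->
    forall p0 pf : pose,
      LSL_reachable v1 v2 v3 w1 w3 p0 pf \/ RSR_reachable v1 v2 v3 w1 w3 p0 pf.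
Proof.
  intros v1 v2 v3 w1 w3 Hv1 Hv2 Hv3 Hw1 Hw3 [[x0 y0] th0] [[xf yf] thf].
  unfold LSL_reachable, RSR_reachable.
  assert (Hr : 0 <= v1 / w1 * (v3 / w3)).
  { apply Rlt_le, Rmult_lt_0_compat; apply Rdiv_lt_0_compat; lra. }
  pose proof (turning_centres_far _ _ th0 thf Hr) as Hfar.
  destruct (far_discs_disjoint
              (x0 - v1 / w1 * sin th0 + v3 / w3 * sin thf)
              (y0 + v1 / w1 * cos th0 - v3 / w3 * cos thf)
              (x0 + v1 / w1 * sin th0 - v3 / w3 * sin thf)
              (y0 - v1 / w1 * cos th0 + v3 / w3 * cos thf)
              (v3 / w3 - v1 / w1) xf yf) as [Hlsl | Hrsr].
  - nra.
  - left. apply csc_reachable; lra.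
  - right. apply csc_reachable; try lra.
    rewrite !Rdiv_opp_r. nra.
Qed.
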